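(* Let $H$ be a $\{P,C\}$-free 3-graph on vertex set $V$, let $e_1,e_2\in H$ with $e_1\cap e_2=\{x\}$, set $U=e_1\cup e_2$, $W=V\setminus U$, and assume $H[W]$ has at least one edge. Let $W_0$ be the set of vertices of degree $0$ in $H[W]$, $W_1=W\setminus W_0$ (so $|W_1|\ge 3$), and let $H_1$ be the set of edges $h\in H$ with $h\cap U\ne\emptyset$, $h\cap W\neq\emptyset$ and $h\cap W\subseteq W_1$. Then $|H_1|\le 2|W_1|-3$, and if moreover $|W_1|\ge 4$ then $|H[U]|+|H_1|\le 2|W_1|+2$.
   Context: All hypergraphs are 3-uniform; edge sets are identified with the 3-graphs; $H[S]$ is the sub-3-graph induced on $S$. $P$ is the loose 3-uniform path of length 3: vertices $a,b,c,d,e,f,g$, edges $\{a,b,c\},\{c,d,e\},\{e,f,g\}$. $C$ is the loose triangle: vertices $x_1,x_2,x_3,y_1,y_2,y_3$, edges $\{x_1,y_3,x_2\},\{x_2,y_1,x_3\},\{x_3,y_2,x_1\}$. $\{P,C\}$-free means containing no copy of $P$ and no copy of $C$. *)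

From mathcomp Require Import all_boot.
Set Implicit Arguments. Unset Strict Implicit. Unset Printing Implicit Defensive.

Definition uniform3 (T : finType) (H : {set {set T}}) : Prop :=
  forall h, h \in H -> #|h| = 3.

Definition has_P (T : finType) (H : {set {set T}}) : Prop :=
  exists a b c d e f g : T,
    uniq [:: a; b; c; d; e; f; g] /\
    [set a; b; c] \in H /\ [set c; d; e] \in H /\ [set e; f; g] \in H.

Definition has_C (T : finType) (H : {set {set T}}) : Prop :=
  exists x1 x2 x3 y1 y2 y3 : T,
    uniq [:: x1; x2; x3; y1; y2; y3] /\
    [set x1; y3; x2] \in H /\ [set x2; y1; x3] \in H /\ [set x3; y2; x1] \in H.

Definition PC_free (T : finType) (H : {set {set T}}) : Prop :=
  ~ has_P H /\ ~ has_C H.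

Definition induced (T : finType) (H : {set {set T}}) (S : {set T}) : {set {set T}} :=
  [set h in H | h \subset S].

Definition deg (T : finType) (H : {set {set T}}) (v : T) : nat :=
  #|[set h in H | v \in h]|.

From mathcomp Require Import all_boot zify.
Set Implicit Arguments. Unset Strict Implicit. Unset Printing Implicit Defensive.

(* Every structural fact comes from exhibiting a loose path:
   three edges, consecutive ones meeting in a single vertex, the outer two disjoint, built
   from [e1], [e2], an edge of H[W] and the edge under study. This shows that an edge of H1
   through [w] in W1 is either a pendant [w |: (e_i :\ x)] or an apex edge {x, w, y} with [y]
   in W1. Give each edge of H1 weight 2, split evenly among its vertices in W. The weight
   at [w] is at most its load (2 per pendant at [w] plus the number of apex mates of [w]),
   which is at most 4, and at most 6 in total on the three vertices of an edge of H[W];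
   hence 2|H1| <= 6 + 4 (|W1| - 3). For the second bound: a pendant edge leaves at most 4
   edges inside U; otherwise every load is at most 2, so |H1| <= |W1|, and either H1 is
   empty and |H[U]| <= C(5,3), or H1 contains an apex edge, which forces every edge of H[U]
   through [x], so that |H[U]| <= C(4,2). *)

Section FinsetFacts.
Variable T : finType.
Implicit Types (A B S : {set T}) (a b c z : T).

Lemma set3_swap a b c : [set a; b; c] = [set a; c; b].
Proof. by apply/setP=> z; rewrite !inE; case: (z == a); case: (z == b); case: (z == c). Qed.

Lemma set3_swap12 a b c : [set a; b; c] = [set b; a; c].
Proof. by apply/setP=> z; rewrite !inE; case: (z == a); case: (z == b); case: (z == c). Qed.

Lemma set3_rot a b c : [set a; b; c] = [set b; c; a].
Proof. by apply/setP=> z; rewrite !inE; case: (z == a); case: (z == b); case: (z == c). Qed.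

Lemma card_set3_uniq a b c : #|[set a; b; c]| = 3 -> [&& a != b, a != c & b != c].
Proof.
move=> abc3; have : uniq [:: a; b; c].
  by apply/card_uniqP; rewrite [size _]/= -abc3; apply: eq_card=> z; rewrite !inE orbA.
by rewrite /= !inE negb_or andbT -andbA.
Qed.

Lemma card3_set3 A c : #|A| = 3 -> c \in A -> exists a b, A = [set c; a; b].
Proof.
move=> A3 cA; have : #|A :\ c| == 2 by move: A3; rewrite (cardsD1 c) cA add1n => -[->].
case/cards2P=> a [b [_ Ec]]; exists a, b.
by rewrite -(setD1K cA) Ec; apply/setP=> z; rewrite !inE orbA.
Qed.

Lemma card3_set3_pair A c e :
  #|A| = 3 -> c \in A -> e \in A -> c != e -> exists d, A = [set c; d; e].
Proof.
move=> A3 cA eA ce; have [a [b EA]] := card3_set3 A3 cA.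
move: eA; rewrite EA !inE => /orP[/orP[]|] /eqP ee; subst e.
- by rewrite eqxx in ce.
- by exists b; rewrite set3_swap.
- by exists a.
Qed.

Lemma setI1_mem A B c : A :&: B = [set c] -> c \in A /\ c \in B.
Proof. by move=> E; apply/andP; rewrite -in_setI E set11. Qed.

Lemma setI1_eq A B c z : A :&: B = [set c] -> z \in A -> z \in B -> z = c.
Proof. by move=> E zA zB; apply/set1P; rewrite -E inE zA zB. Qed.

Lemma setI1_intro A B c :
  c \in A -> c \in B -> (forall z, z \in A -> z \in B -> z = c) -> A :&: B = [set c].
Proof.
move=> cA cB uniq_c; apply/setP=> z; rewrite !inE.
by apply/andP/eqP=> [[zA zB]|->]; [exact: uniq_c | split].
Qed.

Lemma disjoint_of_mem A B : (forall z, z \in A -> z \in B -> False) -> [disjoint A & B].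
Proof.
move=> AB; rewrite -setI_eq0; apply/eqP/setP=> z; rewrite !inE.
by apply/negP=> /andP[zA zB]; exact: AB zA zB.
Qed.

Lemma card_setI1 A b : #|A :&: [set b]| = (b \in A).
Proof.
have [bA|bA] := boolP (b \in A); first by rewrite (setIidPr _) ?cards1 ?sub1set.
apply/eqP; rewrite cards_eq0; apply/eqP/setP=> z; rewrite !inE.
by apply/andP=> -[zA /eqP zb]; subst; rewrite zA in bA.
Qed.

Lemma sum_mem_card A S : \sum_(i in A) (i \in S) = #|A :&: S|.
Proof.
rewrite -sum1_card [RHS](eq_bigl (fun i => (i \in A) && (i \in S))) => [|i]; last by rewrite inE.
by rewrite -big_mkcondr /=; apply: eq_bigl.
Qed.

Lemma sum_eq_mem A b : \sum_(i in A) (i == b) = (b \in A).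
Proof. by rewrite -card_setI1 -sum_mem_card; apply: eq_bigr=> i _; rewrite inE. Qed.

Lemma card_le_sub2 A b c : A \subset [set b; c] -> #|A| <= (b \in A) + (c \in A).
Proof.
move=> sA; have E : A = (A :&: [set b]) :|: (A :&: [set c]).
  apply/setP=> z; rewrite !inE; case zA: (z \in A) => //=.
  by move/subsetP: sA => /(_ _ zA); rewrite !inE.
by rewrite {1}E cardsU !card_setI1 leq_subr.
Qed.

End FinsetFacts.

Definition covered (T : finType) (H : {set {set T}}) (S : {set T}) : {set T} :=
  S :\: [set w in S | deg (induced H S) w == 0].

Lemma coveredP (T : finType) (H : {set {set T}}) (S : {set T}) w :
  reflect (exists f, [/\ f \in H, f \subset S & w \in f]) (w \in covered H S).
Proof.
rewrite !inE /deg; apply: (iffP idP) => [/andP[nz wS]|[f [fH fS wf]]].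
  move: nz; rewrite wS /= -lt0n card_gt0 => /set0Pn[f].
  by rewrite !inE => /andP[/andP[fH fS] wf]; exists f.
rewrite (subsetP fS _ wf) andbT -lt0n card_gt0; apply/set0Pn.
by exists f; rewrite !inE fH fS wf.
Qed.

Lemma covered_sub (T : finType) (H : {set {set T}}) (S : {set T}) w :
  w \in covered H S -> w \in S.
Proof. by case/setDP. Qed.

(* For [S = e1 :|: e2], [covered H (~: S)] and [crossing_edges H S] are the sets W1 and H1
   of the statement. *)
Definition crossing_edges (T : finType) (H : {set {set T}}) (S : {set T}) : {set {set T}} :=
  [set h in H | [&& h :&: S != set0, h :&: ~: S != set0 & h :&: ~: S \subset covered H (~: S)]].

Definition bowtie (T : finType) (H : {set {set T}}) (e1 e2 : {set T}) (x : T) :=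
  [/\ e1 \in H, e2 \in H & e1 :&: e2 = [set x]].

Lemma bowtieC (T : finType) (H : {set {set T}}) e1 e2 x :
  bowtie H e1 e2 x -> bowtie H e2 e1 x.
Proof. by case=> *; split; rewrite // setIC. Qed.

Definition pendant (T : finType) (e : {set T}) (x w : T) : {set T} := w |: (e :\ x).

Section PFree.
Variables (T : finType) (H : {set {set T}}).
Hypotheses (H3 : uniform3 H) (noP : ~ has_P H).
Implicit Types (S e f g : {set T}) (p q w y : T).

Lemma no_loose_path3 g1 g2 g3 (c e : T) :
  g1 \in H -> g2 \in H -> g3 \in H ->
  g1 :&: g2 = [set c] -> g2 :&: g3 = [set e] -> [disjoint g1 & g3] -> False.
Proof.
move=> g1H g2H g3H E12 E23 D13.
have [c1 c2] := setI1_mem E12; have [e2 e3] := setI1_mem E23.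
have ce : c != e by apply/eqP=> ce; subst e; rewrite (disjointFr D13 c1) in e3.
have [a [b Eg1]] := card3_set3 (H3 g1H) c1.
have [d Eg2] := card3_set3_pair (H3 g2H) c2 e2 ce.
have [f [g Eg3]] := card3_set3 (H3 g3H) e3.
apply: noP; exists a, b, c, d, e, f, g; split; last first.
  by rewrite -Eg2 -Eg3 -(set3_rot c) -Eg1.
(* the seven vertices are distinct: the three edges cover 3 + 3 + 3 - 1 - 1 vertices *)
apply/card_uniqP; rewrite (@eq_card _ _ (g1 :|: g2 :|: g3)) => [|z].
  rewrite cardsU setIUl E23 (disjoint_setI0 D13) set0U cards1 cardsU E12 cards1.
  by rewrite !H3.
rewrite Eg1 Eg2 Eg3 !inE.
by case: (z == a); case: (z == b); case: (z == c); case: (z == d);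
  case: (z == e); case: (z == f); case: (z == g).
Qed.

Lemma cross_pair_mem S e f w p q :
  e \in H -> e \subset S -> f \in H -> f \subset ~: S -> w \in f ->
  [set w; p; q] \in H -> p \in S -> q \in S -> p \in e -> q \in e.
Proof.
move=> eH eS fH fS wf hH pS qS pe; apply/negPn/negP=> qe.
have outS z : z \in f -> z \notin S by move=> zf; move: (subsetP fS _ zf); rewrite inE.
apply: (no_loose_path3 eH hH fH (c := p) (e := w)).
- apply: setI1_intro => [||z ze]; rewrite ?set11 ?inE ?eqxx ?orbT //.
  move=> /orP[/orP[]|] /eqP zz; subst z => //.
    by move: (outS _ wf); rewrite (subsetP eS _ ze).
  by rewrite ze in qe.
- apply: setI1_intro => [||z]; rewrite ?inE ?eqxx //.
  by move=> /orP[/orP[]|] /eqP-> // /outS; rewrite ?pS ?qS.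
- by apply: disjoint_of_mem=> z /(subsetP eS) zS /outS; rewrite zS.
Qed.

Lemma card_edgeD1 e x : e \in H -> x \in e -> #|e :\ x| = 2.
Proof. by move=> eH xe; move: (H3 eH); rewrite (cardsD1 x) xe add1n => -[]. Qed.

Lemma card_induced_le S : #|induced H S| <= 'C(#|S|, 3).
Proof.
rewrite -cards_draws; apply: subset_leq_card; apply/subsetP=> g.
by rewrite !inE => /andP[gH ->]; rewrite (H3 gH).
Qed.

Section Bowtie.
Variables (e1 e2 : {set T}) (x : T).
Hypothesis bt : bowtie H e1 e2 x.
Let e1H : e1 \in H. Proof. by case: bt. Qed.
Let e2H : e2 \in H. Proof. by case: bt. Qed.
Let e12 : e1 :&: e2 = [set x]. Proof. by case: bt. Qed.
Local Notation U := (e1 :|: e2).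
Local Notation W := (~: (e1 :|: e2)).

Let x1 : x \in e1 := (setI1_mem e12).1.
Let x2 : x \in e2 := (setI1_mem e12).2.

Lemma memW z : (z \in W) = (z \notin e1) && (z \notin e2).
Proof. by rewrite !inE negb_or. Qed.

Lemma cross_vertex_apex w p q :
  [set w; p; q] \in H -> w \in W -> q \in W -> p \in e1 -> p = x.
Proof.
move=> hH; rewrite !memW => /andP[w1 w2] /andP[q1 q2] p1.
apply/eqP/negPn/negP=> px.
apply: (no_loose_path3 e2H e1H hH (c := x) (e := p)); first by rewrite setIC.
- apply: setI1_intro => [||z z1]; rewrite ?inE ?eqxx ?orbT //.
  by case/orP=> [/orP[]|] /eqP zz; subst z => //; [rewrite z1 in w1 | rewrite z1 in q1].
- apply: disjoint_of_mem=> z z2; rewrite !inE => /orP[/orP[]|] /eqP zz; subst z.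
  + by rewrite z2 in w2.
  + by move: (setI1_eq e12 p1 z2) => /eqP; rewrite (negbTE px).
  + by rewrite z2 in q2.
Qed.

Lemma apex_mate_in_edge w y f :
  [set x; w; y] \in H -> w \in W -> y \in W -> f \in H -> f \subset W -> w \in f -> y \in f.
Proof.
move=> hH wW yW fH fW wf; apply/negPn/negP=> yf.
move: wW yW; rewrite !memW => /andP[w1 w2] /andP[y1 y2].
have f1 z : z \in f -> z \notin e1 by move=> /(subsetP fW); rewrite memW => /andP[].
apply: (no_loose_path3 e1H hH fH (c := x) (e := w)).
- apply: setI1_intro => [||z z1]; rewrite ?inE ?eqxx //.
  by case/orP=> [/orP[]|] /eqP zz; subst z => //; [rewrite z1 in w1 | rewrite z1 in y1].
- apply: setI1_intro => [||z]; rewrite ?inE ?eqxx ?orbT //.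
  case/orP=> [/orP[]|] /eqP-> //; first by move/f1; rewrite x1.
  by move=> yf'; rewrite yf' in yf.
- by apply: disjoint_of_mem=> z z1 /f1; rewrite z1.
Qed.

Lemma apex_edge_no_pendant w y :
  [set x; w; y] \in H -> w \in W -> y \in W -> pendant e1 x w \notin H.
Proof.
move=> hH; rewrite !memW => /andP[w1 w2] /andP[y1 y2]; apply/negP=> pH.
apply: (no_loose_path3 e2H hH pH (c := x) (e := w)).
- apply: setI1_intro => [||z z2]; rewrite ?inE ?eqxx //.
  by case/orP=> [/orP[]|] /eqP zz; subst z => //; [rewrite z2 in w2 | rewrite z2 in y2].
- apply: setI1_intro => [||z]; rewrite ?inE ?eqxx ?orbT //.
  case/orP=> [/orP[]|] /eqP-> //; first by rewrite eqxx /= orbF => /eqP.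
  by rewrite (negbTE y1) andbF orbF => /eqP.
- apply: disjoint_of_mem=> z z2; rewrite !inE => /orP[/eqP zw|/andP[zx z1]].
  + by subst; rewrite z2 in w2.
  + by move: (setI1_eq e12 z1 z2) => /eqP; rewrite (negbTE zx).
Qed.

Lemma pendant_vertices_eq f v v' :
  f \in H -> f \subset W -> v \in f -> v' \in f ->
  pendant e1 x v \in H -> pendant e2 x v' \in H -> v = v'.
Proof.
move=> fH fW vf v'f p1H p2H; apply/eqP/negPn/negP=> vv'.
have fU z : z \in f -> (z \notin e1) && (z \notin e2) by move/(subsetP fW); rewrite memW.
apply: (no_loose_path3 p1H fH p2H (c := v) (e := v')).
- apply: setI1_intro => [||z]; rewrite ?inE ?eqxx //.
  by case/orP=> [/eqP //|/andP[_ z1] /fU]; rewrite z1.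
- apply: setI1_intro => [||z zf]; rewrite ?inE ?eqxx //.
  by case/orP=> [/eqP //|/andP[_ z2]]; move: (fU _ zf); rewrite z2 andbF.
- apply: disjoint_of_mem=> z; rewrite !inE.
  case/orP=> [/eqP->|/andP[zx z1]] /orP[/eqP zv'|/andP[_ z2]].
  + by rewrite zv' eqxx in vv'.
  + by move: (fU _ vf); rewrite z2 andbF.
  + by move: (fU _ v'f); rewrite -zv' z1.
  + by move: (setI1_eq e12 z1 z2) => /eqP; rewrite (negbTE zx).
Qed.

Lemma cross_edge_pendant w p q f :
  [set w; p; q] \in H -> w \in W -> p != q -> p \in e1 -> p \notin e2 -> q \in U ->
  f \in H -> f \subset W -> w \in f -> [set w; p; q] = pendant e1 x w.
Proof.
move=> hH wW pq p1 p2 qU fH fW wf.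
have pU : p \in U by rewrite inE p1.
have q1 : q \in e1 := cross_pair_mem e1H (subsetUl _ _) fH fW wf hH pU qU p1.
have q2 : q \notin e2.
  apply/negP=> q2; rewrite set3_swap in hH.
  by rewrite (cross_pair_mem e2H (subsetUr _ _) fH fW wf hH qU pU q2) in p2.
have px : p != x by apply: contraNneq p2 => ->.
have qx : q != x by apply: contraNneq q2 => ->.
have e1x : e1 :\ x = [set p; q].
  apply/esym/eqP; rewrite eqEcard cards2 pq (card_edgeD1 e1H x1) andbT.
  by apply/subsetP=> z; rewrite !inE => /orP[]/eqP->; rewrite ?px ?qx.
by rewrite /pendant e1x; apply/setP=> z; rewrite !inE orbA.
Qed.

Lemma card_bowtie : #|U| = 5.
Proof. by rewrite cardsU (H3 e1H) (H3 e2H) e12 cards1. Qed.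

Lemma induced_through_apex w y g :
  [set x; w; y] \in H -> w \in W -> y \in W -> g \in induced H U -> x \in g.
Proof.
move=> hH wW yW; rewrite inE => /andP[gH gU]; apply/negPn/negP=> xg.
have outU z : z \in W -> z \in U -> False by rewrite inE => /negP.
have gA : [disjoint g & [set x; w; y]].
  apply: disjoint_of_mem=> z zg; have zU := subsetP gU _ zg.
  rewrite !inE => /orP[/orP[]|] /eqP zz; subst z.
  - by rewrite zg in xg.
  - exact: outU wW zU.
  - exact: outU yW zU.
have not_single e : e \in H -> x \in e -> e \subset U -> #|g :&: e| != 1.
  move=> eH xe eU; apply/negP=> /cards1P[c Ec].
  have eA : e :&: [set x; w; y] = [set x].
    apply: setI1_intro => [||z ze]; rewrite ?inE ?eqxx //.
    case/orP=> [/orP[]|] /eqP zz; subst z => //.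
      by case: (outU _ wW (subsetP eU _ ze)).
    by case: (outU _ yW (subsetP eU _ ze)).
  exact: no_loose_path3 gH eH hH Ec eA gA.
have at_most2 e : e \in H -> x \in e -> #|g :&: e| <= 2.
  move=> eH xe; rewrite -(card_edgeD1 eH xe); apply: subset_leq_card.
  apply/subsetP=> z; rewrite !inE => /andP[zg ->]; rewrite andbT.
  by apply: contraNneq xg => <-.
have split3 : #|g :&: e1| + #|g :&: e2| = 3.
  rewrite -(H3 gH) -{3}(setIidPl gU) setIUr cardsU setIACA setIid e12 card_setI1.
  by rewrite (negbTE xg) subn0.
move: split3 (at_most2 _ e1H x1) (at_most2 _ e2H x2).
move: (not_single _ e1H x1 (subsetUl _ _)) (not_single _ e2H x2 (subsetUr _ _)).
by case: #|g :&: e1| => [|[|[|]]]; case: #|g :&: e2| => [|[|[|]]].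
Qed.

Lemma apex_induced_le6 w y :
  [set x; w; y] \in H -> w \in W -> y \in W -> #|induced H U| <= 6.
Proof.
move=> hH wW yW.
apply: (@leq_trans #|[set x |: s | s in [set s : {set T} | s \subset U :\ x & #|s| == 2]]|).
  apply: subset_leq_card; apply/subsetP=> g gI.
  have xg := induced_through_apex hH wW yW gI.
  move: gI; rewrite inE => /andP[gH gU]; apply/imsetP; exists (g :\ x).
    by rewrite inE (card_edgeD1 gH xg) eqxx andbT setSD.
  by rewrite setD1K.
apply: leq_trans (leq_imset_card _ _) _; rewrite cards_draws.
by move: (cardsD1 x U); rewrite card_bowtie in_setU x1 add1n => -[<-].
Qed.

Lemma induced_meet_pendant_neq1 w f g :
  pendant e1 x w \in H -> f \in H -> f \subset W -> w \in f -> g \in H -> g \subset U ->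
  #|g :&: (e1 :\ x)| != 1.
Proof.
move=> pH fH fW wf gH gU.
have fU z : z \in f -> z \notin U by move/(subsetP fW); rewrite inE.
have wg : w \notin g by apply/negP=> /(subsetP gU); apply/negP; exact: fU.
(* a single common vertex of [g] and [e1 :\ x] would start the loose path [g], pendant, [f] *)
apply/negP=> /cards1P[c Ec]; apply: (no_loose_path3 gH pH fH (c := c) (e := w)).
- rewrite -Ec; apply/setP=> z; rewrite !inE; case zg: (z \in g) => //=.
  have -> // : (z == w) = false by apply: contraNF wg => /eqP <-.
- apply: setI1_intro => [||z]; rewrite ?inE ?eqxx //.
  by case/orP=> [/eqP //|/andP[_ z1] /fU]; rewrite inE z1.
- by apply: disjoint_of_mem=> z /(subsetP gU) zU /fU; rewrite zU.
Qed.

Lemma induced_of_pendant w f g :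
  pendant e1 x w \in H -> f \in H -> f \subset W -> w \in f -> g \in H -> g \subset U ->
  g = e2 \/ exists2 z, z \in e2 & g = pendant e1 x z.
Proof.
move=> pH fH fW wf gH gU.
have not_single := induced_meet_pendant_neq1 pH fH fW wf gH gU.
have e1x2 := card_edgeD1 e1H x1.
have [gI0|/set0Pn[c]] := eqVneq (g :&: (e1 :\ x)) set0.
  left; apply/eqP; rewrite eqEcard (H3 gH) (H3 e2H) leqnn andbT.
  apply/subsetP=> z zg; case/setUP: (subsetP gU _ zg) => [z1|//].
  have [-> //|zx] := eqVneq z x.
  by move/setP/(_ z): gI0; rewrite !inE zg zx z1.
rewrite inE => /andP[cg ce1].
have k2 : #|g :&: (e1 :\ x)| = 2.
  have := subset_leq_card (subsetIr g (e1 :\ x)); rewrite e1x2.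
  have : 0 < #|g :&: (e1 :\ x)| by rewrite card_gt0; apply/set0Pn; exists c; rewrite inE cg.
  by move: not_single; case: #|_| => [|[|[|]]].
have e1xg : e1 :\ x \subset g.
  have /eqP <- : g :&: (e1 :\ x) == e1 :\ x by rewrite eqEcard subsetIr k2 e1x2.
  exact: subsetIl.
have : #|g :\: (e1 :\ x)| == 1.
  by have := cardsID (e1 :\ x) g; rewrite k2 (H3 gH) -[3]/(2 + 1) => /addnI ->.
case/cards1P=> z Ez.
have : z \in g :\: (e1 :\ x) by rewrite Ez set11.
rewrite !inE => /andP[zn zg]; right; exists z.
  case/setUP: (subsetP gU _ zg) => [z1|//].
  by move: zn; rewrite z1 andbT negbK => /eqP ->.
apply/setP=> v; rewrite /pendant !inE.
have [vx|vx] := boolP ((v != x) && (v \in e1)).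
  by rewrite orbT; apply: (subsetP e1xg); rewrite !inE.
rewrite orbF; apply/idP/eqP=> [vg|->//].
by apply/set1P; rewrite -Ez !inE vx vg.
Qed.

Lemma pendant_induced_le4 w f :
  pendant e1 x w \in H -> f \in H -> f \subset W -> w \in f -> #|induced H U| <= 4.
Proof.
move=> pH fH fW wf.
apply: (@leq_trans #|e2 |: [set pendant e1 x z | z in e2]|).
  apply: subset_leq_card; apply/subsetP=> g; rewrite inE => /andP[gH gU].
  have [->|[z ze2 ->]] := induced_of_pendant pH fH fW wf gH gU; rewrite !inE ?eqxx //.
  by apply/orP; right; apply/imsetP; exists z.
rewrite cardsU1 -(H3 e2H) -add1n; apply: leq_add; [exact: leq_b1 | exact: leq_imset_card].
Qed.

End Bowtie.

Section Load.
Variables (e1 e2 : {set T}) (x : T).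
Hypothesis bt : bowtie H e1 e2 x.
Let e1H : e1 \in H. Proof. by case: bt. Qed.
Let e2H : e2 \in H. Proof. by case: bt. Qed.
Let e12 : e1 :&: e2 = [set x]. Proof. by case: bt. Qed.
Local Notation U := (e1 :|: e2).
Local Notation W := (~: (e1 :|: e2)).
Local Notation W1 := (covered H (~: (e1 :|: e2))).
Local Notation H1 := (crossing_edges H (e1 :|: e2)).

Let btC : bowtie H e2 e1 x := bowtieC bt.
Let WC : ~: (e2 :|: e1) = W. Proof. by rewrite setUC. Qed.

Lemma cross_edge_cases h w f :
  h \in H -> w \in h -> w \in W -> f \in H -> f \subset W -> w \in f -> h :&: U != set0 ->
  [\/ h = pendant e1 x w, h = pendant e2 x w |
      exists y, [/\ y \in W, y != w & h = [set x; w; y]]].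
Proof.
move=> hH wh wW fH fW wf /set0Pn[u]; rewrite inE => /andP[uh uU].
have [p [q Eh]] := card3_set3 (H3 hH) wh.
have /and3P[wp wq pq] : [&& w != p, w != q & p != q].
  by apply: card_set3_uniq; rewrite -Eh (H3 hH).
have wW' : w \in ~: (e2 :|: e1) by rewrite WC.
wlog pU : p q wp wq pq Eh / p \in U.
  move=> gen; have [pU|pU] := boolP (p \in U); first exact: (gen p q).
  apply: (gen q p) => //; [by rewrite eq_sym | by rewrite Eh set3_swap |].
  move: uh uU; rewrite Eh !inE => /orP[/orP[]|] /eqP-> //.
    by move=> wU; move: wW; rewrite !inE wU.
  by move=> pU'; move: pU; rewrite inE pU'.
rewrite {}Eh in hH *.
have [qU|qW] := boolP (q \in U); last first.
  rewrite -in_setC in qW; have qW' : q \in ~: (e2 :|: e1) by rewrite WC.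
  have px : p = x.
    case/setUP: pU => [p1|p2]; first exact: (cross_vertex_apex bt hH wW qW p1).
    exact: (cross_vertex_apex btC hH wW' qW' p2).
  by subst p; constructor 3; exists q; rewrite eq_sym wq set3_swap12.
have [p1|p1] := boolP (p \in e1); last first.
  have p2 : p \in e2 by case/setUP: pU => // p1'; rewrite p1' in p1.
  constructor 2; apply: (cross_edge_pendant btC hH wW' pq p2 p1 _ fH _ wf).
    by rewrite setUC.
  by rewrite WC.
have [p2|p2] := boolP (p \in e2); last first.
  by constructor 1; exact: (cross_edge_pendant bt hH wW pq p1 p2 qU fH fW wf).
have q1 := cross_pair_mem e1H (subsetUl _ _) fH fW wf hH pU qU p1.
have q2 := cross_pair_mem e2H (subsetUr _ _) fH fW wf hH pU qU p2.
by move: pq; rewrite (setI1_eq e12 p1 p2) (setI1_eq e12 q1 q2) eqxx.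
Qed.

Definition apex_mates w := [set y in W1 | [set x; w; y] \in H].

Definition load w :=
  2 * (pendant e1 x w \in H) + 2 * (pendant e2 x w \in H) + #|apex_mates w|.

Lemma apex_mates_sub w f : f \in H -> f \subset W -> w \in f -> apex_mates w \subset f :\ w.
Proof.
move=> fH fW wf; apply/subsetP=> y; rewrite inE => /andP[yW1 hH].
have /and3P[_ _ wy] := card_set3_uniq (H3 hH).
rewrite in_setD1 eq_sym wy /=.
exact: (apex_mate_in_edge bt hH (subsetP fW _ wf) (covered_sub yW1) fH fW wf).
Qed.

Lemma card_apex_mates w : w \in W1 -> #|apex_mates w| <= 2.
Proof.
case/coveredP=> f [fH fW wf]; rewrite -(card_edgeD1 fH wf).
exact/subset_leq_card/apex_mates_sub.
Qed.

Lemma apex_matesC w y : w \in W1 -> y \in W1 -> (y \in apex_mates w) = (w \in apex_mates y).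
Proof. by rewrite !inE set3_swap => -> ->. Qed.

Lemma apex_mates_no_pendant w :
  w \in W1 -> apex_mates w != set0 -> (pendant e1 x w \notin H) && (pendant e2 x w \notin H).
Proof.
move=> /covered_sub wW /set0Pn[y]; rewrite inE => /andP[/covered_sub yW hH].
rewrite (apex_edge_no_pendant bt hH wW yW).
by apply: (apex_edge_no_pendant btC hH); rewrite WC.
Qed.

Lemma load_le4 w : w \in W1 -> load w <= 4.
Proof.
move=> wW1; rewrite /load; have [->|mates] := eqVneq (apex_mates w) set0.
  by rewrite cards0; case: (_ \in H); case: (_ \in H).
move/andP: (apex_mates_no_pendant wW1 mates) => [/negbTE -> /negbTE ->].
exact: leq_trans (card_apex_mates wW1) _.
Qed.

Lemma card_apex_mates_edge v u u' :
  [set v; u; u'] \in H -> [set v; u; u'] \subset W ->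
  #|apex_mates v| <= (u \in apex_mates v) + (u' \in apex_mates v).
Proof.
move=> fH fW; have vf : v \in [set v; u; u'] by rewrite !inE eqxx.
apply/card_le_sub2/(subset_trans (apex_mates_sub fH fW vf)).
by apply/subsetP=> z; rewrite !inE => /andP[/negbTE->].
Qed.

Lemma apex_mates_no_pendants v v' :
  v \in W1 -> v' \in W1 -> v' \in apex_mates v ->
  ~~ [|| pendant e1 x v \in H, pendant e2 x v \in H,
         pendant e1 x v' \in H | pendant e2 x v' \in H].
Proof.
move=> vW1 v'W1 v'v.
have m_v : apex_mates v != set0 by apply/set0Pn; exists v'.
have m_v' : apex_mates v' != set0 by apply/set0Pn; exists v; rewrite (apex_matesC v'W1 vW1).
move: (apex_mates_no_pendant vW1 m_v) (apex_mates_no_pendant v'W1 m_v').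
by move=> /andP[/negbTE-> /negbTE->] /andP[/negbTE-> /negbTE->].
Qed.

(* [pv1], [pv2] say whether there are pendants at the vertex [v] of an edge [{a, b, c}] of
   [H[W]], and [yuv] whether [u] and [v] are apex mates; the hypotheses are the exclusions
   given by [pendant_vertices_eq] and [apex_mates_no_pendants]. *)
Lemma load_triangle_arith (pa1 pa2 pb1 pb2 pc1 pc2 yab yac ybc : bool) :
  ~~ (pa1 && pb2) -> ~~ (pa1 && pc2) -> ~~ (pb1 && pa2) ->
  ~~ (pb1 && pc2) -> ~~ (pc1 && pa2) -> ~~ (pc1 && pb2) ->
  (yab ==> ~~ [|| pa1, pa2, pb1 | pb2]) -> (yac ==> ~~ [|| pa1, pa2, pc1 | pc2]) ->
  (ybc ==> ~~ [|| pb1, pb2, pc1 | pc2]) ->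
  (2 * pa1 + 2 * pa2 + (yab + yac)) + (2 * pb1 + 2 * pb2 + (yab + ybc)) +
  (2 * pc1 + 2 * pc2 + (yac + ybc)) <= 6.
Proof.
by case: pa1; case: pa2; case: pb1; case: pb2; case: pc1; case: pc2;
  case: yab; case: yac; case: ybc.
Qed.

Lemma load_edge_le6 a b c :
  [set a; b; c] \in H -> [set a; b; c] \subset W -> load a + load b + load c <= 6.
Proof.
move=> fH fW; set f := [set a; b; c].
have /and3P[ab ac bc] := card_set3_uniq (H3 fH).
have af : a \in f by rewrite !inE eqxx.
have bf : b \in f by rewrite !inE eqxx orbT.
have cf : c \in f by rewrite !inE eqxx orbT.
have onW1 v : v \in f -> v \in W1 by move=> vf; apply/coveredP; exists f.
have Ya := card_apex_mates_edge fH fW.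
have Yb : #|apex_mates b| <= (a \in apex_mates b) + (c \in apex_mates b).
  by apply: card_apex_mates_edge; rewrite set3_swap12.
have Yc : #|apex_mates c| <= (a \in apex_mates c) + (b \in apex_mates c).
  by apply: card_apex_mates_edge; rewrite set3_rot.
rewrite (apex_matesC (onW1 _ bf) (onW1 _ af)) (apex_matesC (onW1 _ cf) (onW1 _ af))
  (apex_matesC (onW1 _ cf) (onW1 _ bf)) in Yb Yc.
have pend v v' : v \in f -> v' \in f -> v != v' ->
    ~~ ((pendant e1 x v \in H) && (pendant e2 x v' \in H)).
  move=> vf v'f vv'; apply/negP=> /andP[p1H p2H].
  by rewrite (pendant_vertices_eq bt fH fW vf v'f p1H p2H) eqxx in vv'.
have := load_triangle_arith (pend _ _ af bf ab) (pend _ _ af cf ac) (pend _ _ bf af _)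
  (pend _ _ bf cf bc) (pend _ _ cf af _) (pend _ _ cf bf _)
  (introT implyP (apex_mates_no_pendants (onW1 _ af) (onW1 _ bf)))
  (introT implyP (apex_mates_no_pendants (onW1 _ af) (onW1 _ cf)))
  (introT implyP (apex_mates_no_pendants (onW1 _ bf) (onW1 _ cf))).
rewrite ![b == a]eq_sym ![c == a]eq_sym ![c == b]eq_sym ab ac bc => /(_ isT isT isT).
by apply: leq_trans; rewrite /load !leq_add.
Qed.

Definition cross_share h := 3 - #|h :&: W|.

Definition cross_weight w := \sum_(h in H1) (w \in h) * cross_share h.

Lemma cross_share_card h : h \in H1 -> #|W1 :&: h| * cross_share h = 2.
Proof.
rewrite inE => /andP[hH /and3P[hU hW hW1]].
have -> : W1 :&: h = h :&: W.
  apply/setP=> z; rewrite in_setI [RHS]in_setI andbC.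
  apply/andP/andP=> [[zh /covered_sub zW]|[zh zW]]; split=> //.
  by apply: (subsetP hW1); rewrite in_setI zh.
have k1 : 0 < #|h :&: W| by rewrite card_gt0.
have k0 : 0 < #|h :&: U| by rewrite card_gt0.
have := cardsID U h; rewrite setDE (H3 hH) /cross_share.
by move: k1 k0; case: #|h :&: W| => [|[|[|k]]] //; lia.
Qed.

Lemma double_count : 2 * #|H1| = \sum_(w in W1) cross_weight w.
Proof.
rewrite /cross_weight exchange_big /= mulnC -sum_nat_const; apply: eq_bigr => h hH1.
by rewrite -big_distrl /= sum_mem_card cross_share_card.
Qed.

Lemma cross_weight_le_load w : w \in W1 -> cross_weight w <= load w.
Proof.
move=> wW1; have [f [fH fW wf]] := coveredP _ _ _ wW1.
set apex_edges := [set [set x; w; y] | y in apex_mates w].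
apply: (@leq_trans (\sum_(h in H1) (2 * (h == pendant e1 x w) + 2 * (h == pendant e2 x w)
                                      + (h \in apex_edges)))).
  apply: leq_sum => h; rewrite inE => /andP[hH /and3P[hU hW hW1]].
  have [wh|_] := boolP (w \in h); last by rewrite mul0n.
  rewrite mul1n /cross_share.
  have share2 : 3 - #|h :&: W| <= 2 by rewrite leq_subLR addn2 !ltnS card_gt0.
  case: (cross_edge_cases hH wh (covered_sub wW1) fH fW wf hU) => [Eh|Eh|[y [yW yw Eh]]].
  - by rewrite [in h == pendant e1 x w]Eh eqxx -addnA (leq_trans share2) ?leq_addr.
  - by rewrite [in h == pendant e2 x w]Eh eqxx addnAC (leq_trans share2) ?leq_addl.
  have yh : y \in h by rewrite Eh !inE eqxx orbT.
  have yW1 : y \in W1 by apply: (subsetP hW1); rewrite in_setI yh.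
  have -> : h \in apex_edges by apply/imsetP; exists y => //; rewrite inE yW1 -Eh hH.
  (* [h] has the two vertices [w] and [y] in [W], so its share is 1 *)
  apply: leq_trans (leq_addl _ _); rewrite leq_subLR.
  apply: (@leq_trans (1 + #|[set w; y]|)); first by rewrite cards2 eq_sym yw.
  rewrite addnC leq_add2r; apply: subset_leq_card; apply/subsetP=> z.
  by case/set2P=> ->; rewrite in_setI ?wh ?yh ?yW ?(covered_sub wW1).
have inH1 h : (h \in H1) <= (h \in H).
  by case: (boolP (h \in H1)) => //; rewrite inE => /andP[->].
rewrite big_split big_split /= -!big_distrr /= !sum_eq_mem sum_mem_card /load.
rewrite !leq_add ?leq_mul2l ?inH1 ?orbT //.
exact: leq_trans (subset_leq_card (subsetIr _ _)) (leq_imset_card _ _).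
Qed.

Lemma card_crossing_le : induced H W != set0 -> #|H1| + 3 <= 2 * #|W1|.
Proof.
move=> /set0Pn[f]; rewrite inE => /andP[fH fW].
have [c cf] : exists c, c \in f by apply/set0Pn; rewrite -card_gt0 (H3 fH).
have [a [b Ef]] := card3_set3 (H3 fH) cf.
have /and3P[ca cb ab] : [&& c != a, c != b & a != b].
  by apply: card_set3_uniq; rewrite -Ef (H3 fH).
have fW1 : f \subset W1 by apply/subsetP=> z zf; apply/coveredP; exists f.
have W1_f := cardsID f W1; rewrite (setIidPr fW1) (H3 fH) in W1_f.
have : \sum_(w in W1) cross_weight w <= 6 + #|W1 :\: f| * 4.
  apply: (@leq_trans (\sum_(w in W1) load w)); first exact: leq_sum cross_weight_le_load.
  rewrite (big_setID f) /= (setIidPr fW1) -sum_nat_const leq_add //; last first.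
    by apply: leq_sum=> w /setDP[wW1 _]; exact: load_le4.
  rewrite Ef setUC big_setU1 /=; last by rewrite !inE negb_or !(eq_sym b) cb ab.
  rewrite big_setU1 /=; last by rewrite inE.
  by rewrite big_set1 addnA load_edge_le6 // -set3_rot -set3_rot -Ef.
rewrite -double_count; lia.
Qed.

Lemma card_induced_crossing_le :
  induced H W != set0 -> 4 <= #|W1| -> #|induced H U| + #|H1| <= 2 * #|W1| + 2.
Proof.
move=> HW W1_4; have H1_le := card_crossing_le HW.
case: (pickP (fun w => (w \in W1) && ((pendant e1 x w \in H) || (pendant e2 x w \in H)))).
  move=> w /andP[/coveredP[f [fH fW wf]] /orP[p1H|p2H]].
    by have := pendant_induced_le4 bt p1H fH fW wf; clear -H1_le W1_4; lia.
  have fW' : f \subset ~: (e2 :|: e1) by rewrite WC.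
  have := pendant_induced_le4 btC p2H fH fW' wf; rewrite setUC.
  by clear -H1_le W1_4; lia.
move=> no_pendant.
have H1_W1 : #|H1| <= #|W1|.
  rewrite -(leq_pmul2l (isT : 0 < 2)) double_count mulnC -sum_nat_const.
  apply: leq_sum => w wW1; apply: leq_trans (cross_weight_le_load wW1) _.
  move: (no_pendant w); rewrite wW1 /= /load => /norP[/negbTE-> /negbTE->].
  exact: card_apex_mates.
have [H1_0|/set0Pn[h]] := eqVneq H1 set0.
  have := card_induced_le U; rewrite H1_0 cards0 (card_bowtie bt) -[ 'C(5, 3)]/10.
  by clear -W1_4; lia.
rewrite inE => /andP[hH /and3P[hU /set0Pn[w wI] hW1]]; move: wI; rewrite inE => /andP[wh wW].
have wW1 : w \in W1 by apply: (subsetP hW1); rewrite in_setI wh.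
have [f [fH fW wf]] := coveredP _ _ _ wW1.
move: (no_pendant w); rewrite wW1 /= => /norP[p1H p2H].
case: (cross_edge_cases hH wh wW fH fW wf hU) => [Eh|Eh|[y [yW _ Eh]]].
- by rewrite -Eh hH in p1H.
- by rewrite -Eh hH in p2H.
rewrite Eh in hH; apply: leq_trans (leq_add (apex_induced_le6 bt hH wW yW) H1_W1) _.
by clear -W1_4; lia.
Qed.

End Load.
End PFree.

Theorem mainTheorem10 (T : finType) (H : {set {set T}}) (e1 e2 : {set T}) (x : T) :
  uniform3 H -> PC_free H ->
  e1 \in H -> e2 \in H -> e1 :&: e2 = [set x] ->
  let U := e1 :|: e2 in
  let W := ~: U in
  induced H W != set0 ->
  let W0 := [set w in W | deg (induced H W) w == 0] in
  let W1 := W :\: W0 in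
  let H1 := [set h in H | [&& h :&: U != set0, h :&: W != set0 & h :&: W \subset W1]] in
  #|H1| + 3 <= 2 * #|W1| /\
  (4 <= #|W1| -> #|induced H U| + #|H1| <= 2 * #|W1| + 2).
Proof.
move=> H3 [noP _] e1H e2H e12 U W HW W0 W1 H1.
have bt : bowtie H e1 e2 x by [].
split; first exact: (card_crossing_le H3 noP bt HW).
exact: (card_induced_crossing_le H3 noP bt HW).
Qed.
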